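(* Let $L,M$ be distributive lattices and $T:L\to M$ a surjective lattice homomorphism. Then the induced Banach lattice homomorphism $\overline T:\mathrm{FBL}\langle L\rangle\to\mathrm{FBL}\langle M\rangle$, i.e. the unique Banach lattice homomorphism with $\overline T(\delta_x)=\delta_{Tx}$ for all $x\in L$, is surjective.
   Context: For a distributive lattice $L$, $L^*$ is the set of all lattice homomorphisms $x^*:L\to[-1,1]$; for $x\in L$, $\delta_x:L^*\to\mathbb R$ is $\delta_x(x^* )=x^*(x)$. A function $f:L^*\to\mathbb R$ is positively homogeneous if $f(\lambda x^* )=\lambda f(x^* )$ whenever $\lambda\ge0$ and $\lambda x^*\in L^*$; for such $f$, $\|f\|=\sup\{\sum_{i=1}^m|f(x_i^* )|: m\in\mathbb N,\ x_i^*\in L^*,\ \sup_{x\in L}\sum_{i=1}^m|x_i^*(x)|\le1\}$. $\mathrm{FBL}\langle L\rangle$ is the norm closure of the vector sublattice generated by $\{\delta_x:x\in L\}$ inside the Banach lattice of positively homogeneous functions on $L^*$ with finite norm, with pointwise order and operations. It satisfies the universal property: for every Banach lattice $X$ and bounded lattice homomorphism $S:L\to X$ there is a unique Banach lattice homomorphism $\widehat S:\mathrm{FBL}\langle L\rangle\to X$ with $\widehat S(\delta_x)=S(x)$ and $\|\widehat S\|=\sup_{x\in L}\|Sx\|$. *)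

From HB Require Import structures.
From mathcomp Require Import all_boot all_order all_algebra.
From mathcomp Require Import reals.
Set Implicit Arguments. Unset Strict Implicit. Unset Printing Implicit Defensive.
Import Order.TTheory GRing.Theory Num.Theory.
Local Open Scope ring_scope.

Definition lattice_hom (d1 d2 : Order.disp_t) (L : distrLatticeType d1)
  (M : distrLatticeType d2) (T : L -> M) : Prop :=
  forall x y, T (Order.meet x y) = Order.meet (T x) (T y) /\
              T (Order.join x y) = Order.join (T x) (T y).

Record dual (R : realType) (d : Order.disp_t) (L : distrLatticeType d) := Dual {
  dfun : L -> R;
  dfun_hom : forall x y, dfun (Order.meet x y) = Num.min (dfun x) (dfun y) /\
                         dfun (Order.join x y) = Num.max (dfun x) (dfun y);
  dfun_bnd : forall x, -1 <= dfun x <= 1 }.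

Section FBL.
Variables (R : realType) (d : Order.disp_t) (L : distrLatticeType d).


Definition delta (x : L) : dual R L -> R := fun xs => dfun xs x.

Definition pos_hom (f : dual R L -> R) : Prop :=
  forall (xs ys : dual R L) (lam : R), 0 <= lam ->
    (forall x, dfun ys x = lam * dfun xs x) -> f ys = lam * f xs.

Definition norm_le (f : dual R L -> R) (c : R) : Prop :=
  forall (m : nat) (xs : 'I_m -> dual R L),
    (forall x : L, \sum_(i < m) `|dfun (xs i) x| <= 1) ->
    \sum_(i < m) `|f (xs i)| <= c.

Inductive gen_vl : (dual R L -> R) -> Prop :=
| gen_delta x : gen_vl (delta x)
| gen_add f g : gen_vl f -> gen_vl g -> gen_vl (fun xs => f xs + g xs)
| gen_scale (c : R) f : gen_vl f -> gen_vl (fun xs => c * f xs)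
| gen_max f g : gen_vl f -> gen_vl g -> gen_vl (fun xs => Num.max (f xs) (g xs)).

Definition FBL (f : dual R L -> R) : Prop :=
  pos_hom f /\ (exists c, norm_le f c) /\
  forall eps : R, 0 < eps ->
    exists g, gen_vl g /\ norm_le (fun xs => f xs - g xs) eps.

End FBL.

Definition induced_BL_hom (R : realType) (d1 d2 : Order.disp_t)
  (L : distrLatticeType d1) (M : distrLatticeType d2) (T : L -> M)
  (Phi : (dual R L -> R) -> (dual R M -> R)) : Prop :=
  (forall f, FBL f -> FBL (Phi f)) /\
  (forall f g, FBL f -> FBL g ->
     Phi (fun xs => f xs + g xs) = (fun ys => Phi f ys + Phi g ys)) /\
  (forall (c : R) f, FBL f -> Phi (fun xs => c * f xs) = (fun ys => c * Phi f ys)) /\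
  (forall f g, FBL f -> FBL g ->
     Phi (fun xs => Num.max (f xs) (g xs)) = (fun ys => Num.max (Phi f ys) (Phi g ys))) /\
  (exists C : R, forall f c, FBL f -> norm_le f c -> norm_le (Phi f) (C * c)) /\
  (forall x : L, Phi (delta x) = delta (T x)).

(* Elements of the vector lattice generated by the [delta x] are lattice-linear
   expressions in the [delta x].  Pulling back along [T^*] sends [delta x] to
   [delta (T x)], so by surjectivity of [T] every such expression over [M] is
   the pullback of one over [L], and truncating at [eps * max |delta a|]
   preserves a uniform bound [eps].  For these expressions the FBL norm is at
   most twice the uniform norm (all variables lie between one meet and one
   join), so lifting the differences of a fast approximating sequence of [g]
   gives a series converging in [FBL<L>] to a preimage of [g].  Any induced
   homomorphism is bounded and agrees with the pullback on generators, hence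
   equals the pullback on all of [FBL<L>]. *)

From mathcomp Require Import all_boot all_order all_algebra.
From mathcomp Require Import boolp classical_sets reals lra.
Import Order.TTheory GRing.Theory Num.Theory.
Local Open Scope ring_scope.
Set Implicit Arguments. Unset Strict Implicit.

Section LatticeLinearExpressions.
Variable R : realDomainType.

Inductive expr (A : Type) :=
| EVar : A -> expr A
| EAdd : expr A -> expr A -> expr A
| EScale : R -> expr A -> expr A
| EMax : expr A -> expr A -> expr A.

Arguments EVar {A}.
Arguments EAdd {A}.
Arguments EScale {A}.
Arguments EMax {A}.

Fixpoint eval {A} (v : A -> R) (e : expr A) : R :=
  match e with
  | EVar a => v a
  | EAdd e1 e2 => eval v e1 + eval v e2
  | EScale c e1 => c * eval v e1
  | EMax e1 e2 => Num.max (eval v e1) (eval v e2)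
  end.

Fixpoint occurs {A} (a : A) (e : expr A) : Prop :=
  match e with
  | EVar b => a = b
  | EAdd e1 e2 | EMax e1 e2 => occurs a e1 \/ occurs a e2
  | EScale _ e1 => occurs a e1
  end.

Fixpoint emap {A B} (s : A -> B) (e : expr A) : expr B :=
  match e with
  | EVar a => EVar (s a)
  | EAdd e1 e2 => EAdd (emap s e1) (emap s e2)
  | EScale c e1 => EScale c (emap s e1)
  | EMax e1 e2 => EMax (emap s e1) (emap s e2)
  end.

Fixpoint absmax {A} (e : expr A) : expr A :=
  match e with
  | EVar a => EMax (EVar a) (EScale (-1) (EVar a))
  | EAdd e1 e2 | EMax e1 e2 => EMax (absmax e1) (absmax e2)
  | EScale _ e1 => absmax e1
  end.

Lemma eval_emap A B (s : A -> B) (v : B -> R) e :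
  eval v (emap s e) = eval (v \o s) e.
Proof. by elim: e => [a|e1 /= -> e2 ->|c e1 /= ->|e1 /= -> e2 ->]. Qed.

Lemma absmax_emap A B (s : A -> B) e : absmax (emap s e) = emap s (absmax e).
Proof. by elim: e => [a|e1 /= -> e2 ->|c e1 /= ->|e1 /= -> e2 ->]. Qed.

Lemma eq_eval A (v w : A -> R) e :
  (forall a, occurs a e -> v a = w a) -> eval v e = eval w e.
Proof.
elim: e => /= [a|e1 IH1 e2 IH2|c e1 IH|e1 IH1 e2 IH2] vw; first exact: vw.
- by rewrite IH1 ?IH2 // => a Ha; apply: vw; [right|left].
- by rewrite IH.
- by rewrite IH1 ?IH2 // => a Ha; apply: vw; [right|left].
Qed.

Lemma eval_pscale A (v : A -> R) (c : R) e : 0 <= c ->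
  eval (fun a => c * v a) e = c * eval v e.
Proof.
move=> c0; elim: e => [a|e1 /= -> e2 ->|k e1 /= ->|e1 /= -> e2 ->] //.
- by rewrite mulrDr.
- by rewrite mulrCA.
- by rewrite maxr_pMr.
Qed.

Lemma absmax_ge A (v : A -> R) a e : occurs a e -> `|v a| <= eval v (absmax e).
Proof.
elim: e => /= [b ->|e1 IH1 e2 IH2|c e1 IH|e1 IH1 e2 IH2].
- by rewrite mulN1r maxrN.
- by case=> [/IH1|/IH2] h; rewrite le_max h ?orbT.
- exact: IH.
- by case=> [/IH1|/IH2] h; rewrite le_max h ?orbT.
Qed.

Lemma absmax_ge0 A (v : A -> R) e : 0 <= eval v (absmax e).
Proof.
elim: e => /= [b|e1 IH1 e2 IH2|c e1 IH|e1 IH1 e2 IH2] //.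
- by rewrite mulN1r maxrN.
- by rewrite le_max IH1.
- by rewrite le_max IH1.
Qed.

Lemma absmax_le A (v : A -> R) e C :
  (forall a, occurs a e -> `|v a| <= C) -> eval v (absmax e) <= C.
Proof.
elim: e => /= [b|e1 IH1 e2 IH2|c e1 IH|e1 IH1 e2 IH2] vC.
- by rewrite mulN1r maxrN; apply: vC.
- by rewrite ge_max IH1 ?IH2 // => a Ha; apply: vC; [right|left].
- exact: IH.
- by rewrite ge_max IH1 ?IH2 // => a Ha; apply: vC; [right|left].
Qed.

Definition clip (B a : R) : R := Num.max (- B) (Num.min a B).

Lemma clip_id B a : `|a| <= B -> clip B a = a.
Proof. by rewrite ler_norml => /andP[Ba aB]; rewrite /clip min_l // max_r. Qed.

Lemma normr_clip B a : 0 <= B -> `|clip B a| <= B.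
Proof.
move=> B0; rewrite ler_norml /clip le_max lexx ge_max ge_min lexx orbT /=.
by rewrite andbT (le_trans _ B0) // oppr_le0.
Qed.

Lemma clip_homo B : {homo clip B : a b / a <= b}.
Proof. by move=> a b ab; apply/le_max2/le_min2. Qed.

Lemma homo_minmax (phi : R -> R) a b : {homo phi : r s / r <= s} ->
  phi (Num.min a b) = Num.min (phi a) (phi b) /\
  phi (Num.max a b) = Num.max (phi a) (phi b).
Proof.
move=> m; case: (lerP a b) => [ab|/ltW ba].
- by rewrite (min_l (m _ _ ab)) (max_r (m _ _ ab)).
- by rewrite (min_r (m _ _ ba)) (max_l (m _ _ ba)).
Qed.

(* Expressions have no [min]; it is written as [- max (- _) (- _)]. *)
Definition eclip {A} (b e : expr A) : expr A :=
  EMax (EScale (-1) b) (EScale (-1) (EMax (EScale (-1) e) (EScale (-1) b))).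

Lemma eval_eclip A (v : A -> R) b e : eval v (eclip b e) = clip (eval v b) (eval v e).
Proof. by rewrite /= !mulN1r oppr_max !opprK. Qed.

End LatticeLinearExpressions.

Arguments EVar {R A}.
Arguments EAdd {R A}.
Arguments EScale {R A}.
Arguments EMax {R A}.
Arguments eval {R A}.
Arguments occurs {R A}.
Arguments emap {R A B}.
Arguments absmax {R A}.
Arguments eclip {R A}.

Section FreeBanachLattice.
Variables (R : realType) (d : Order.disp_t) (L : distrLatticeType d).
Implicit Types (xs ys : dual R L) (h f : dual R L -> R).

Lemma dfun_homo xs : {homo dfun xs : x y / (x <= y)%O >-> x <= y}.
Proof.
move=> x y xy; have [_ E] := dfun_hom xs x y.
by rewrite (join_r xy) in E; rewrite E le_max lexx.
Qed.

Lemma normr_dfun xs (x : L) : `|dfun xs x| <= 1.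
Proof. by rewrite ler_norml; apply: dfun_bnd. Qed.

Lemma gen_vl_eval (e : expr R L) : gen_vl (fun xs : dual R L => eval (dfun xs) e).
Proof.
elim: e => /= [a|e1 IH1 e2 IH2|c e1 IH|e1 IH1 e2 IH2].
- exact: gen_delta.
- exact: gen_add.
- exact: gen_scale.
- exact: gen_max.
Qed.

Lemma gen_vlP h : gen_vl h -> exists e : expr R L, forall xs, h xs = eval (dfun xs) e.
Proof.
elim=> [x|f g _ [e1 H1] _ [e2 H2]|c f _ [e1 H1]|f g _ [e1 H1] _ [e2 H2]].
- by exists (EVar x).
- by exists (EAdd e1 e2) => xs /=; rewrite H1 H2.
- by exists (EScale c e1) => xs /=; rewrite H1.
- by exists (EMax e1 e2) => xs /=; rewrite H1 H2.
Qed.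

Lemma gen_vl_sub f g : gen_vl f -> gen_vl g -> gen_vl (fun xs => f xs - g xs).
Proof.
move=> gf gg; have := gen_add gf (gen_scale (-1) gg).
by congr gen_vl; apply: funext => xs; rewrite mulN1r.
Qed.

Lemma gen_vl_pos_hom h : gen_vl h -> pos_hom h.
Proof.
move=> /gen_vlP[e He] xs ys lam lam0 ys_lam.
by rewrite !He -eval_pscale //; apply: eq_eval => a _.
Qed.

Lemma gen_vl_bounded h : gen_vl h -> exists2 B, 0 <= B & forall xs, `|h xs| <= B.
Proof.
elim=> [x|f g _ [B1 B10 H1] _ [B2 B20 H2]|c f _ [B1 B10 H1]
       |f g _ [B1 B10 H1] _ [B2 B20 H2]].
- by exists 1 => // xs; apply: normr_dfun.
- exists (B1 + B2) => [|xs]; first exact: addr_ge0.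
  exact: le_trans (ler_normD _ _) (lerD (H1 xs) (H2 xs)).
- exists (`|c| * B1) => [|xs]; first exact: mulr_ge0.
  by rewrite normrM ler_wpM2l.
- exists (B1 + B2) => [|xs]; first exact: addr_ge0.
  case: (lerP (f xs) (g xs)) => _.
  + by apply: le_trans (H2 xs) _; rewrite lerDr.
  + by apply: le_trans (H1 xs) _; rewrite lerDl.
Qed.

Lemma dual_clip_hom xs t : 0 <= t -> forall x y : L,
  clip 1 (dfun xs (Order.meet x y) / t) =
    Num.min (clip 1 (dfun xs x / t)) (clip 1 (dfun xs y / t)) /\
  clip 1 (dfun xs (Order.join x y) / t) =
    Num.max (clip 1 (dfun xs x / t)) (clip 1 (dfun xs y / t)).
Proof.
move=> t0 x y; have [-> ->] := dfun_hom xs x y.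
apply: (@homo_minmax _ (fun r => clip 1 (r / t))) => r s rs.
by apply/clip_homo/ler_wpM2r; rewrite ?invr_ge0.
Qed.

Lemma clip1_bnd (r : R) : -1 <= clip 1 r <= 1.
Proof. by rewrite -ler_norml normr_clip. Qed.

(* [xs] rescaled by [1/t] and truncated to [[-1, 1]], so that it is again in
   [L^*]; on the [x] with [`|xs x| <= t] it is just [xs / t]. *)
Definition dual_clip xs t (t0 : 0 <= t) : dual R L :=
  Dual (dual_clip_hom xs t0) (fun x => clip1_bnd _).

Lemma gen_vl_le_absmax h (e : expr R L) eps :
  (forall xs, h xs = eval (dfun xs) e) -> (forall xs, `|h xs| <= eps) ->
  forall xs, `|h xs| <= eps * eval (dfun xs) (absmax e).
Proof.
move=> He Hb xs; set t := eval (dfun xs) (absmax e).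
have t0 : 0 <= t := absmax_ge0 _ _.
have occ a : occurs a e -> `|dfun xs a| <= t by apply: absmax_ge.
have eps0 : 0 <= eps := le_trans (normr_ge0 _) (Hb xs).
have [tpos|t_le0] := ltrP 0 t; last first.
  have {}t0 : t = 0 by apply/le_anti; rewrite t_le0.
  rewrite He (@eq_eval _ _ _ (fun a => 0 * dfun xs a)) => [|a /occ].
    by rewrite eval_pscale // mul0r normr0 t0 mulr0.
  by rewrite t0 mul0r normr_le0 => /eqP.
have -> : h xs = t * h (dual_clip xs t0).
  rewrite !He -eval_pscale //; apply: eq_eval => a /occ Ha /=.
  rewrite clip_id; first by rewrite mulrCA divff ?mulr1 // gt_eqF.
  by rewrite normrM normfV (gtr0_norm tpos) ler_pdivrMr // mul1r.
by rewrite normrM gtr0_norm // mulrC ler_pM2r.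
Qed.

Lemma norm_le_normr h c : norm_le h c -> forall xs, `|h xs| <= c.
Proof.
move=> hc xs; have := hc 1%N (fun _ => xs).
by rewrite big_ord1; apply => x; rewrite big_ord1 normr_dfun.
Qed.

Lemma eq_norm_le h h' c : h =1 h' -> norm_le h' c -> norm_le h c.
Proof. by move=> hh' h'c m xs xs1; under eq_bigr do rewrite hh'; apply: h'c. Qed.

Lemma norm_le_trans h c c' : c <= c' -> norm_le h c -> norm_le h c'.
Proof. by move=> cc' hc m xs xs1; apply: le_trans (hc m xs xs1) cc'. Qed.

Lemma norm_le_add h1 h2 c1 c2 : norm_le h1 c1 -> norm_le h2 c2 ->
  norm_le (fun xs => h1 xs + h2 xs) (c1 + c2).
Proof.
move=> h1c h2c m xs xs1.
apply: le_trans (_ : \sum_(i < m) (`|h1 (xs i)| + `|h2 (xs i)|) <= _).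
  by apply: ler_sum => i _; apply: ler_normD.
by rewrite big_split lerD ?h1c ?h2c.
Qed.

Fixpoint ejoin (e : expr R L) : L :=
  match e with
  | EVar a => a
  | EAdd e1 e2 | EMax e1 e2 => Order.join (ejoin e1) (ejoin e2)
  | EScale _ e1 => ejoin e1
  end.

Fixpoint emeet (e : expr R L) : L :=
  match e with
  | EVar a => a
  | EAdd e1 e2 | EMax e1 e2 => Order.meet (emeet e1) (emeet e2)
  | EScale _ e1 => emeet e1
  end.

Lemma emeet_le_ejoin a e : occurs a e -> (emeet e <= a <= ejoin e)%O.
Proof.
have step (m1 m2 j1 j2 : L) :
    (m1 <= a <= j1)%O -> (Order.meet m1 m2 <= a <= Order.join j1 j2)%O.
  by case/andP=> m1a aj1; rewrite (le_trans (leIl _ _) m1a) (le_trans aj1 (leUl _ _)).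
elim: e => /= [b ->|e1 IH1 e2 IH2|c e1 IH|e1 IH1 e2 IH2]; rewrite ?lexx //.
- by case=> [/IH1|/IH2] h; [|rewrite meetC joinC]; apply: step.
- by case=> [/IH1|/IH2] h; [|rewrite meetC joinC]; apply: step.
Qed.

(* Every variable [a] of [e] lies between [emeet e] and [ejoin e], so
   [`|xs a| <= `|xs (ejoin e)| + `|xs (emeet e)|], and summing this over an
   admissible family gives at most 2. *)
Lemma gen_vl_norm_le h eps : gen_vl h -> 0 <= eps -> (forall xs, `|h xs| <= eps) ->
  norm_le h (eps + eps).
Proof.
move=> /gen_vlP[e He] eps0 hb m xs xs1.
have hpt ys : `|h ys| <= eps * (`|dfun ys (ejoin e)| + `|dfun ys (emeet e)|).
  apply: le_trans (gen_vl_le_absmax He hb ys) _; rewrite ler_wpM2l //.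
  apply: absmax_le => a /emeet_le_ejoin/andP[ma aj].
  have := dfun_homo ys ma; have := dfun_homo ys aj.
  have := ler_norm (dfun ys (ejoin e)).
  have := ler_norm (- dfun ys (emeet e)); rewrite normrN.
  have := normr_ge0 (dfun ys (ejoin e)); have := normr_ge0 (dfun ys (emeet e)).
  move=> *; rewrite ler_norml; apply/andP; split; lra.
apply: le_trans (ler_sum _ (fun i _ => hpt (xs i))) _.
rewrite -mulr_sumr big_split.
rewrite (le_trans (_ : _ <= eps * (1 + 1))) ?ler_wpM2l ?lerD ?xs1 //.
by rewrite mulrDr mulr1.
Qed.

Lemma gen_vl_FBL h : gen_vl h -> FBL h.
Proof.
move=> gh; split; first exact: gen_vl_pos_hom.
split.
  by have [B B0 hB] := gen_vl_bounded gh; exists (B + B); apply: gen_vl_norm_le.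
move=> eps eps0; exists h; split=> // m xs _.
by rewrite big1 ?ltW // => i _; rewrite subrr normr0.
Qed.

Lemma FBL_add f1 f2 : FBL f1 -> FBL f2 -> FBL (fun xs => f1 xs + f2 xs).
Proof.
move=> [p1 [[c1 H1] a1]] [p2 [[c2 H2] a2]]; split.
  move=> xs ys lam lam0 ys_lam.
  by rewrite (p1 xs ys lam lam0 ys_lam) (p2 xs ys lam lam0 ys_lam) mulrDr.
split; first by exists (c1 + c2); apply: norm_le_add.
move=> eps eps0; have eps20 : 0 < eps / 2 by rewrite divr_gt0.
have [g1 [gg1 Hg1]] := a1 _ eps20; have [g2 [gg2 Hg2]] := a2 _ eps20.
exists (fun xs => g1 xs + g2 xs); split; first exact: gen_add.
rewrite [eps]splitr; apply: eq_norm_le (norm_le_add Hg1 Hg2) => xs.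
by rewrite opprD addrACA.
Qed.

End FreeBanachLattice.

Section InducedHomomorphism.
Variables (R : realType) (d1 d2 : Order.disp_t) (L : distrLatticeType d1)
  (M : distrLatticeType d2) (T : L -> M) (HT : lattice_hom T).

Lemma dual_comp_hom (ys : dual R M) (x y : L) :
  dfun ys (T (Order.meet x y)) = Num.min (dfun ys (T x)) (dfun ys (T y)) /\
  dfun ys (T (Order.join x y)) = Num.max (dfun ys (T x)) (dfun ys (T y)).
Proof. by have [-> ->] := HT x y; apply: dfun_hom. Qed.

Definition Tstar (ys : dual R M) : dual R L :=
  Dual (dual_comp_hom ys) (fun x => dfun_bnd ys (T x)).

Lemma gen_vl_comp f : gen_vl f -> gen_vl (fun ys => f (Tstar ys)).
Proof.
elim=> [x|f1 f2 _ IH1 _ IH2|c f1 _ IH|f1 f2 _ IH1 _ IH2].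
- exact: (gen_delta R (T x)).
- exact: gen_add.
- exact: gen_scale.
- exact: gen_max.
Qed.

Lemma norm_le_comp f c : norm_le f c -> norm_le (fun ys => f (Tstar ys)) c.
Proof. by move=> fc m ys ys1; apply: (fc m (Tstar \o ys)) => x; apply: ys1. Qed.

Lemma FBL_comp f : FBL f -> FBL (fun ys => f (Tstar ys)).
Proof.
move=> [fhom [[c fc] fapprox]]; split.
  by move=> xs ys lam lam0 ys_lam; apply: fhom => // x; apply: ys_lam.
split; first by exists c; apply: norm_le_comp.
move=> eps eps0; have [g [gg fg]] := fapprox eps eps0.
exists (fun ys => g (Tstar ys)); split; first exact: gen_vl_comp.
exact: (norm_le_comp fg).
Qed.

Lemma induced_BL_hom_comp : induced_BL_hom T (fun f ys => f (Tstar ys)).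
Proof.
split; first exact: FBL_comp.
do 3 split=> //; split=> //.
by exists 1 => f c _ fc; rewrite mul1r; apply: norm_le_comp.
Qed.

Lemma induced_BL_hom_gen Phi f : induced_BL_hom T Phi -> gen_vl f ->
  Phi f = (fun ys => f (Tstar ys)).
Proof.
move=> [_ [Hadd [Hscale [Hmax [_ Hdelta]]]]]; elim.
- by move=> x; rewrite Hdelta.
- move=> f1 f2 g1 IH1 g2 IH2.
  by rewrite (Hadd _ _ (gen_vl_FBL g1) (gen_vl_FBL g2)) IH1 IH2.
- by move=> c f1 g1 IH; rewrite (Hscale _ _ (gen_vl_FBL g1)) IH.
- move=> f1 f2 g1 IH1 g2 IH2.
  by rewrite (Hmax _ _ (gen_vl_FBL g1) (gen_vl_FBL g2)) IH1 IH2.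
Qed.

(* Both sides are bounded and agree on the dense subspace [gen_vl]. *)
Lemma induced_BL_hom_FBL Phi f : induced_BL_hom T Phi -> FBL f ->
  Phi f = (fun ys => f (Tstar ys)).
Proof.
move=> PhiT Ff; have [_ [Hadd [_ [_ [[C HC] _]]]]] := PhiT.
apply: funext => ys; apply/eqP; rewrite -subr_eq0 -normr_le0.
apply/ler_addgt0Pr => eps eps0; rewrite add0r.
have C1 : 0 < `|C| + 1 by rewrite ltr_wpDl.
have [g [gg fg]] := Ff.2.2 _ (divr_gt0 eps0 C1); set eps' := eps / _ in fg.
have g'g : gen_vl (fun xs => -1 * g xs) := gen_scale (-1) gg.
have fg' : norm_le (fun xs => f xs + -1 * g xs) eps'.
  by apply: eq_norm_le fg => xs; rewrite mulN1r.
have := norm_le_normr (HC _ _ (FBL_add Ff (gen_vl_FBL g'g)) fg') ys.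
rewrite (Hadd _ _ Ff (gen_vl_FBL g'g)) (induced_BL_hom_gen PhiT g'g) mulN1r.
have := norm_le_normr fg (Tstar ys).
have epsE : eps = (`|C| + 1) * eps' by rewrite mulrC divfK ?gt_eqF.
have : C * eps' <= `|C| * eps' by rewrite ler_wpM2r ?ler_norm ?divr_ge0 ?ltW.
rewrite epsE !ler_norml; move=> ? /andP[? ?] /andP[? ?]; apply/andP; split; lra.
Qed.

Section Lift.
Variables (sel : M -> L) (Tsel : cancel sel T).

Lemma eval_comp_emap ys (e : expr R M) :
  eval (dfun (Tstar ys)) (emap sel e) = eval (dfun ys) e.
Proof. by rewrite eval_emap; apply: eq_eval => a _ /=; rewrite Tsel. Qed.

(* Lift [h] through [T] syntactically via [sel], then truncate at
   [eps * absmax] to recover the uniform bound. *)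
Lemma gen_vl_lift h eps : gen_vl h -> 0 <= eps -> (forall ys, `|h ys| <= eps) ->
  exists k : dual R L -> R, [/\ gen_vl k, forall ys, k (Tstar ys) = h ys &
    forall xs, `|k xs| <= eps].
Proof.
move=> /gen_vlP[e He] eps0 hb; set e' := emap sel e.
exists (fun xs => eval (dfun xs) (eclip (EScale eps (absmax e')) e')); split.
- exact: gen_vl_eval.
- move=> ys; rewrite eval_eclip /= /e' absmax_emap !eval_comp_emap -He.
  by rewrite clip_id // (gen_vl_le_absmax He hb).
- move=> xs; rewrite eval_eclip; apply: le_trans (normr_clip _ _) _.
    by rewrite /= mulr_ge0 ?absmax_ge0.
  by rewrite /= ler_piMr ?absmax_le // => a _; apply: normr_dfun.
Qed.

End Lift.

End InducedHomomorphism.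

Section Dyadic.
Variable R : archiRealFieldType.

Definition dyadic (n : nat) : R := (2 ^+ n)^-1.

Lemma dyadic_gt0 n : 0 < dyadic n.
Proof. by rewrite invr_gt0 exprn_gt0. Qed.

Lemma dyadicS n : dyadic n.+1 + dyadic n.+1 = dyadic n.
Proof. by rewrite /dyadic exprSr invfM -splitr. Qed.

Lemma dyadic_small (eps : R) N : 0 < eps -> exists2 m, (N <= m)%N & dyadic m < eps.
Proof.
move=> eps0; set m := maxn N (Num.Def.archi_bound eps^-1).
exists m; first exact: leq_maxl.
have := upper_nthrootP (leq_maxr N (Num.Def.archi_bound eps^-1)).
by rewrite -ltf_pV2 ?posrE ?exprn_gt0 ?invr_gt0 // invrK.
Qed.

Lemma ler_add_dyadic (x y C : R) N : 0 <= C ->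
  (forall m, (N <= m)%N -> x <= y + C * dyadic m) -> x <= y.
Proof.
move=> C0 xy; apply/ler_addgt0Pr => eps eps0.
have C1 : 0 < C + 1 by rewrite ltr_wpDl.
have [m Nm dm] := dyadic_small N (divr_gt0 eps0 C1).
apply: le_trans (xy m Nm) _; rewrite lerD2l.
rewrite ltr_pdivlMr // in dm; have := dyadic_gt0 m; nra.
Qed.

End Dyadic.

Section DyadicSeries.
Variables (R : realType) (d : Order.disp_t) (L : distrLatticeType d).
Variables (s0 : dual R L -> R) (k : nat -> dual R L -> R).
Hypotheses (gs0 : gen_vl s0) (gk : forall n, gen_vl (k n))
  (normr_k : forall n xs, `|k n xs| <= dyadic R n + dyadic R n).

Fixpoint psum (n : nat) : dual R L -> R :=
  if n is n'.+1 then fun xs => psum n' xs + k n' xs else s0.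

Lemma gen_vl_psum n : gen_vl (psum n).
Proof. by elim: n => [|n IH] //=; apply: gen_add. Qed.

(* Since [`|k n| <= 2 * dyadic n], the intervals [[lower n, upper n]] are nested. *)
Definition lower n xs := psum n xs - 4 * dyadic R n.
Definition upper n xs := psum n xs + 4 * dyadic R n.

Lemma lower_homo xs : {homo lower^~ xs : n m / (n <= m)%N >-> n <= m}.
Proof.
apply: homo_leq => [//|y x z|n]; first exact: le_trans.
have := normr_k n xs; have := dyadicS R n; rewrite /lower /= ler_norml; lra.
Qed.

Lemma upper_homo xs : {homo upper^~ xs : n m / (n <= m)%N >-> m <= n}.
Proof.
apply: (homo_leq (r := fun a b => b <= a)) => [//|y x z xy yz|n].
  exact: le_trans yz xy.
have := normr_k n xs; have := dyadicS R n; rewrite /upper /= ler_norml; lra.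
Qed.

Lemma lower_le_upper n m xs : lower n xs <= upper m xs.
Proof.
have lu p : lower p xs <= upper p xs by rewrite lerD2l; have := dyadic_gt0 R p; lra.
have [nm|/ltnW mn] := leqP n m.
- exact: le_trans (lower_homo xs nm) (lu m).
- exact: le_trans (lu n) (upper_homo xs mn).
Qed.

Definition limit xs := sup [set lower n xs | n in [set: nat]].

Lemma limit_between n xs : lower n xs <= limit xs <= upper n xs.
Proof.
have ub : ubound [set lower n xs | n in [set: nat]] (upper n xs).
  by move=> _ [m _ <-]; apply: lower_le_upper.
apply/andP; split; last by apply: ge_sup => //; exists (lower 0 xs), 0%N.
apply: sup_upper_bound; last by exists n.
by split; [exists (lower 0 xs), 0%N|exists (upper n xs)].
Qed.

Lemma normr_limit_psum n xs : `|limit xs - psum n xs| <= 8 * dyadic R n.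
Proof.
have /andP[] := limit_between n xs; rewrite /lower /upper ler_norml.
have := dyadic_gt0 R n; move=> *; apply/andP; split; lra.
Qed.

Lemma normr_psum_sub n m xs : (n <= m)%N -> `|psum m xs - psum n xs| <= 8 * dyadic R n.
Proof.
move=> nm; have := lower_homo xs nm; have := upper_homo xs nm.
have := lower_le_upper m m xs; rewrite /lower /upper ler_norml.
have := dyadic_gt0 R n; have := dyadic_gt0 R m; move=> *; apply/andP; split; lra.
Qed.

(* On a family of size [p] the pointwise bound on [limit - psum m] only gives
   [p * 8 * dyadic m]; this vanishes as [m] grows, while [psum m - psum n] is
   in [gen_vl], where the uniform bound controls the norm. *)
Lemma norm_le_limit_psum n :
  norm_le (fun xs => limit xs - psum n xs) (16 * dyadic R n).
Proof.
move=> p xs xs1; apply: (@ler_add_dyadic _ _ _ (p%:R * 8) n).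
  by rewrite mulr_ge0 ?ler0n.
move=> m nm.
have gs : gen_vl (fun xs => psum m xs - psum n xs).
  by apply: gen_vl_sub; apply: gen_vl_psum.
have d0 : 0 <= 8 * dyadic R n by rewrite mulr_ge0 ?ltW ?dyadic_gt0.
have := gen_vl_norm_le gs d0 (fun xs => normr_psum_sub xs nm) xs1.
have : \sum_(i < p) `|limit (xs i) - psum m (xs i)| <= p%:R * 8 * dyadic R m.
  apply: le_trans (_ : \sum_(i < p) 8 * dyadic R m <= _).
    by apply: ler_sum => i _; apply: normr_limit_psum.
  by rewrite sumr_const card_ord -mulrA (mulr_natl _ p).
have : \sum_(i < p) `|limit (xs i) - psum n (xs i)| <=
    \sum_(i < p) `|limit (xs i) - psum m (xs i)| +
    \sum_(i < p) `|psum m (xs i) - psum n (xs i)|.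
  rewrite -big_split; apply: ler_sum => i _.
  by rewrite -(subrKA (psum m (xs i))) ler_normD.
lra.
Qed.

Lemma FBL_limit : FBL limit.
Proof.
split.
  move=> xs ys lam lam0 ys_lam; apply/eqP; rewrite -subr_eq0 -normr_le0.
  apply: (@ler_add_dyadic _ _ _ (8 + 8 * lam) 0); first by lra.
  move=> m _; have hom := gen_vl_pos_hom (gen_vl_psum m) lam0 ys_lam.
  have := normr_limit_psum m ys; have := normr_limit_psum m xs.
  rewrite !ler_norml => /andP[h1 h2] /andP[h3 h4].
  have := ler_wpM2l lam0 h1; have := ler_wpM2l lam0 h2.
  rewrite add0r => *; apply/andP; split; lra.
split.
  have [B B0 hB] := gen_vl_bounded gs0.
  exists (16 * dyadic R 0 + (B + B)).
  apply: eq_norm_le (norm_le_add (norm_le_limit_psum 0) (gen_vl_norm_le gs0 B0 hB)).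
  by move=> xs /=; rewrite subrK.
move=> eps eps0; have [m _ dm] := dyadic_small 0 (divr_gt0 eps0 (ltr0n R 16)).
exists (psum m); split; first exact: gen_vl_psum.
apply: norm_le_trans (norm_le_limit_psum m).
by move: dm; rewrite ltr_pdivlMr // mulrC => /ltW.
Qed.

End DyadicSeries.

Section Surjectivity.
Variables (R : realType) (d1 d2 : Order.disp_t) (L : distrLatticeType d1)
  (M : distrLatticeType d2) (T : L -> M) (HT : lattice_hom T).
Variables (sel : M -> L) (Tsel : cancel sel T).

(* With [G n] a [dyadic n]-approximation of [g], lift [G 0] and the
   differences [G n.+1 - G n] through [T]; the lifted series converges in
   [FBL<L>] to a preimage of [g]. *)
Lemma FBL_lift g : FBL g ->
  exists2 f : dual R L -> R, FBL f & forall ys, f (Tstar HT ys) = g ys.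
Proof.
move=> Fg; have [G HG] := choice (fun n => Fg.2.2 _ (dyadic_gt0 R n)).
have gG n : gen_vl (G n) := (HG n).1.
have gGn n ys : `|g ys - G n ys| <= dyadic R n := norm_le_normr (HG n).2 ys.
have [B B0 hB] := gen_vl_bounded (gG 0%N).
have [s0 [gs0 s0T _]] := gen_vl_lift HT Tsel (gG 0%N) B0 hB.
have dG n ys : `|G n.+1 ys - G n ys| <= dyadic R n + dyadic R n.
  have := gGn n ys; have := gGn n.+1 ys; have := dyadicS R n.
  by rewrite !ler_norml => ? /andP[? ?] /andP[? ?]; apply/andP; split; lra.
have d0 n : 0 <= dyadic R n + dyadic R n by rewrite addr_ge0 ?ltW ?dyadic_gt0.
have [k Hk] := choice (fun n =>
  gen_vl_lift HT Tsel (gen_vl_sub (gG n.+1) (gG n)) (d0 n) (dG n)).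
have gk n : gen_vl (k n) by have [] := Hk n.
have kb n xs : `|k n xs| <= dyadic R n + dyadic R n by have [_ _] := Hk n; apply.
have psumT n ys : psum s0 k n (Tstar HT ys) = G n ys.
  by elim: n => [|n /= ->]; [apply: s0T|have [_ -> _] := Hk n; rewrite addrC subrK].
exists (limit s0 k) => [|ys]; first exact: FBL_limit.
apply/eqP; rewrite -subr_eq0 -normr_le0.
apply: (@ler_add_dyadic _ _ _ 9 0) => // m _.
have := normr_limit_psum s0 kb m (Tstar HT ys); have := gGn m ys.
rewrite psumT add0r !ler_norml => /andP[? ?] /andP[? ?].
by apply/andP; split; lra.
Qed.

End Surjectivity.

Unset Implicit Arguments.

Theorem mainTheorem16 (R : realType) (d1 d2 : Order.disp_t)
  (L : distrLatticeType d1) (M : distrLatticeType d2) (T : L -> M) :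
  lattice_hom T -> (forall y : M, exists x : L, T x = y) ->
  (exists Phi : (dual R L -> R) -> (dual R M -> R), induced_BL_hom T Phi) /\
  (forall Phi : (dual R L -> R) -> (dual R M -> R), induced_BL_hom T Phi ->
     forall g : dual R M -> R, FBL g -> exists f : dual R L -> R, FBL f /\ Phi f = g).
Proof.
move=> HT Tsurj; split; first by eexists; apply: (induced_BL_hom_comp R HT).
move=> Phi PhiT g Fg; have [sel Tsel] := choice Tsurj.
have [f Ff fg] := FBL_lift HT Tsel Fg.
by exists f; split=> //; rewrite (induced_BL_hom_FBL HT PhiT Ff); apply: funext.
Qed.
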